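(* Let $\mathbf w=\mathbf v_1a\mathbf v_2a\mathbf v_3$ where $a$ is a letter and $\mathbf v_1,\mathbf v_2,\mathbf v_3$ are possibly empty words. Suppose that $a$ occurs in $\mathbf v_1$ and that every letter occurring in $\mathbf v_2$ occurs at least twice in $\mathbf w$. Then the variety $\mathbf O$ satisfies the identity $\mathbf w\approx\mathbf v_1\mathbf v_2a\mathbf v_3$.
   Context: Words are elements of the free monoid over a countably infinite alphabet. $\mathbf O$ is the monoid variety defined by the identities $x^2y^2\approx y^2x^2$ and $xzxyxty\approx xzyxty$. *)

From mathcomp Require Import all_boot.
Set Implicit Arguments. Unset Strict Implicit. Unset Printing Implicit Defensive.

Definition word := seq nat.

Record monoid := Monoid {
  carrier :> Type;
  mop : carrier -> carrier -> carrier;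
  munit : carrier;
  mopA : forall x y z, mop x (mop y z) = mop (mop x y) z;
  mop1x : forall x, mop munit x = x;
  mopx1 : forall x, mop x munit = x }.

Definition eval (M : monoid) (f : nat -> M) (w : word) : M :=
  foldr (fun x acc => mop (f x) acc) (munit M) w.

Definition sat (M : monoid) (u v : word) : Prop :=
  forall f : nat -> M, eval f u = eval f v.

(* Defining identities of O, with x = 0, y = 1, z = 2, t = 3:
   x^2 y^2 ~ y^2 x^2   and   x z x y x t y ~ x z y x t y. *)
Definition in_O (M : monoid) : Prop :=
  sat M [:: 0; 0; 1; 1] [:: 1; 1; 0; 0] /\
  sat M [:: 0; 2; 0; 1; 0; 3; 1] [:: 0; 2; 1; 0; 3; 1].

Definition O_satisfies (u v : word) : Prop :=
  forall M : monoid, in_O M -> sat M u v.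

From mathcomp Require Import all_boot.

(* The second occurrence of a is moved left through v2, one letter y at a time,
   until it meets the first one, where the two merge because x z x x = x z x
   holds in O (second identity with y = t = 1).  If y already occurs before it,
   y and a commute: doubling both letters with x z x x = x z x makes the first
   identity x^2 y^2 = y^2 x^2 applicable.  Otherwise y occurs twice, hence also
   in v3, and the second identity, read as a y a = y a between an earlier a and
   a later y, lets a copy of a pass y. *)

Section EvalInO.

Variables (M : monoid) (f : nat -> M).
Local Notation E := (eval f).

Lemma eval_cat s t : E (s ++ t) = mop (E s) (E t).
Proof. by elim: s => [|x s IH] /=; rewrite ?mop1x // IH mopA. Qed.

Lemma eval_cons x s : E (x :: s) = mop (f x) (E s).
Proof. by []. Qed.

Hypothesis MO : in_O M.

Lemma O_sq_commute (x y s : M) :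
  mop x (mop x (mop y (mop y s))) = mop y (mop y (mop x (mop x s))).
Proof.
have := congr1 (fun m => mop m s) (MO.1 (fun n => if n is 0 then x else y)).
by rewrite /= -!mopA !mop1x.
Qed.

Lemma O_drop_mid (x z y t s : M) :
  mop x (mop z (mop x (mop y (mop x (mop t (mop y s)))))) =
  mop x (mop z (mop y (mop x (mop t (mop y s))))).
Proof.
have := congr1 (fun m => mop m s)
  (MO.2 (fun n => match n with 0 => x | 1 => y | 2 => z | _ => t end)).
by rewrite /= -!mopA !mop1x.
Qed.

Lemma eval_dup p a q : a \in p -> E (p ++ a :: a :: q) = E (p ++ a :: q).
Proof.
case/splitPr=> p1 p2; rewrite -!catA /= !(eval_cat, eval_cons); congr (mop _ _).
have := O_drop_mid (f a) (E p2) (munit M) (E q) (munit M).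
by rewrite !mop1x !mopx1.
Qed.

Lemma eval_drop_copy p a y q : a \in p -> y \in q ->
  E (p ++ a :: y :: a :: q) = E (p ++ y :: a :: q).
Proof.
case/splitPr=> p1 p2; case/splitPr=> q1 q2.
by rewrite -!catA /= !(eval_cat, eval_cons) O_drop_mid.
Qed.

Lemma eval_swap p a y q : a \in p -> y \in p ->
  E (p ++ a :: y :: q) = E (p ++ y :: a :: q).
Proof.
move=> ap yp.
rewrite -(eval_dup p a) // -[a :: a :: y :: q]/([:: a; a] ++ y :: q) catA.
rewrite -(eval_dup (p ++ [:: a; a]) y) ?mem_cat ?yp //.
rewrite -(eval_dup p y) // -[y :: y :: a :: q]/([:: y; y] ++ a :: q) catA.
rewrite -(eval_dup (p ++ [:: y; y]) a) ?mem_cat ?ap //.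
by rewrite -!catA /= !(eval_cat, eval_cons) O_sq_commute.
Qed.

Lemma eval_merge_occ v1 a v2 v3 : a \in v1 ->
  (forall x, x \in v2 -> 1 < count_mem x (v1 ++ a :: v2 ++ a :: v3)) ->
  E (v1 ++ a :: v2 ++ a :: v3) = E (v1 ++ v2 ++ a :: v3).
Proof.
move=> av1; elim/last_ind: v2 v3 => [|u y IH] v3 twice.
  by rewrite eval_dup.
set p := v1 ++ a :: u.
have ap : a \in p by rewrite mem_cat mem_head orbT.
have av1u : a \in v1 ++ u by rewrite mem_cat av1.
have -> : v1 ++ a :: rcons u y ++ a :: v3 = p ++ y :: a :: v3
  by rewrite cat_rcons -catA.
have -> : v1 ++ rcons u y ++ a :: v3 = (v1 ++ u) ++ y :: a :: v3
  by rewrite cat_rcons catA.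
have IHu v3' : (forall x, count_mem x (y :: a :: v3) <= count_mem x (a :: v3')) ->
    E (p ++ a :: v3') = E ((v1 ++ u) ++ a :: v3').
  move=> le_count; rewrite -catA -catA IH // => x xu.
  apply: leq_trans (twice x _) _; first by rewrite mem_rcons inE xu orbT.
  rewrite cat_rcons -cat_cons -[in leqRHS]cat_cons !catA.
  by rewrite [in leqLHS]count_cat [in leqRHS]count_cat leq_add2l.
have [yv1u | yNv1u] := boolP (y \in v1 ++ u).
  have yp : y \in p by move: yv1u; rewrite !mem_cat inE => /orP [->|->]; rewrite ?orbT.
  rewrite -eval_swap // IHu => [|x].
    by rewrite eval_swap.
  by rewrite /= addnCA.
have yv3 : y \in v3.
  have := twice y; rewrite mem_rcons mem_head => /(_ isT).
  rewrite cat_rcons -cat_cons !count_cat /= eqxx.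
  have /count_memPn -> : y \notin v1 by apply: contra yNv1u; rewrite mem_cat => ->.
  have /count_memPn -> : y \notin u by apply: contra yNv1u; rewrite mem_cat orbC => ->.
  have /negPf -> : a != y by apply: contraNneq yNv1u => <-.
  by rewrite !add0n add1n ltnS -has_count has_pred1.
rewrite -eval_drop_copy ?inE ?yv3 ?orbT // IHu => [|x].
  by rewrite eval_drop_copy.
by rewrite [in leqRHS]/= leq_addl.
Qed.

End EvalInO.

Theorem lemma3p3 (v1 v2 v3 : word) (a : nat) :
  a \in v1 ->
  (forall x, x \in v2 -> 2 <= count_mem x (v1 ++ a :: v2 ++ a :: v3)) ->
  O_satisfies (v1 ++ a :: v2 ++ a :: v3) (v1 ++ v2 ++ a :: v3).
Proof. by move=> av1 twice M MO f; apply: eval_merge_occ. Qed.
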